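(* Let $M\subset\mathbb{R}^2$ be open with coordinates $(x,u)$, let $M^{(1)}$ be the first-order jet space with coordinates $(x,u,u_x)$, and consider the ODE $u_{xx}=\phi(x,u,u_x)$ with associated vector field $\mathbf{A}=\partial_x+u_x\partial_u+\phi\,\partial_{u_x}$. Let $(\partial_u,\lambda_1)$ and $(\partial_u,\lambda_2)$ be the canonical representatives of two non-equivalent generalized $\mathcal{C}^\infty$-symmetries of this ODE, and let $\mathcal{A}_1,\mathcal{A}_2$ be their respective $\mathbf{A}$-equivalence classes. Denote $\mathbf{X}_i=(\partial_u)^{[\lambda_i,(1)]}=\partial_u+\lambda_i\partial_{u_x}$ ($i=1,2$), let $\rho=\dfrac{\mathbf{X}_1(\lambda_2)-\mathbf{X}_2(\lambda_1)}{\lambda_1-\lambda_2}$, and let $f_1,f_2$ be two functions on $M^{(1)}$ satisfying $\dfrac{\mathbf{X}_1(f_2)}{f_2}=\dfrac{\mathbf{X}_2(f_1)}{f_1}=\rho$. Set $\rho_i=\lambda_i-\mathbf{A}(f_i)/f_i$ ($i=1,2$). Then: (1) $(f_1\partial_u,\rho_1)\in\mathcal{A}_1$ and $(f_2\partial_u,\rho_2)\in\mathcal{A}_2$; (2) denoting $\mathbf{Y}_1=(f_1\partial_u)^{[\rho_1,(1)]}$ and $\mathbf{Y}_2=(f_2\partial_u)^{[\rho_2,(1)]}$, one has $[\mathbf{Y}_1,\mathbf{A}]=\rho_1\mathbf{Y}_1$, $[\mathbf{Y}_2,\mathbf{A}]=\rho_2\mathbf{Y}_2$ and $[\mathbf{Y}_1,\mathbf{Y}_2]=0$;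 in particular $\mathbf{Y}_1,\mathbf{Y}_2$ commute.
   Context: All functions are smooth on $M^{(1)}$ and all statements are local, on an open set where the functions appearing in denominators ($\lambda_1-\lambda_2$, $f_1$, $f_2$) do not vanish. For smooth $\xi,\eta,\lambda$ on $M^{(1)}$ and $\mathbf{v}=\xi\partial_x+\eta\partial_u$, the $\lambda$-prolongation is $\mathbf{v}^{[\lambda,(1)]}=\mathbf{v}+\big((\mathbf{A}+\lambda)(\eta)-(\mathbf{A}+\lambda)(\xi)u_x\big)\partial_{u_x}$. The pair $(\mathbf{v},\lambda)$ is a generalized $\mathcal{C}^\infty$-symmetry of the ODE if $[\mathbf{v}^{[\lambda,(1)]},\mathbf{A}]=\lambda\,\mathbf{v}^{[\lambda,(1)]}+\mu\mathbf{A}$ with $\mu=-(\mathbf{A}+\lambda)(\xi)$. Two generalized $\mathcal{C}^\infty$-symmetries $(\mathbf{v}_1,\lambda_1)$, $(\mathbf{v}_2,\lambda_2)$ are $\mathbf{A}$-equivalent if $\{\mathbf{A},\mathbf{v}_1^{[\lambda_1,(1)]},\mathbf{v}_2^{[\lambda_2,(1)]}\}$ is linearly dependent over $C^\infty(M^{(1)})$; this is an equivalence relation whose classes are the $\mathbf{A}$-equivalence classes. If $Q=\eta-\xi u_x$ is the characteristic of $\mathbf{v}$, the canonical representative of the class of $(\mathbf{v},\lambda)$ is $(\partial_u,\lambda+\mathbf{A}(Q)/Q)$. *)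

From Stdlib Require Import Reals.
From Coquelicot Require Import Coquelicot.
Open Scope R_scope.

(* Functions on (an open subset of) the jet space M^(1), coordinates (x,u,p),
   p standing for u_x. *)
Definition fn3 := R -> R -> R -> R.

Definition open3 (U : R -> R -> R -> Prop) : Prop :=
  forall x u p, U x u p -> exists eps, 0 < eps /\
    forall x' u' p', Rabs (x' - x) < eps -> Rabs (u' - u) < eps ->
      Rabs (p' - p) < eps -> U x' u' p'.

Definition dx (f : fn3) : fn3 := fun x u p => Derive (fun t => f t u p) x.
Definition du (f : fn3) : fn3 := fun x u p => Derive (fun t => f x t p) u.
Definition dp (f : fn3) : fn3 := fun x u p => Derive (fun t => f x u t) p.

Definition cont_at3 (f : fn3) x u p : Prop :=
  forall eps, 0 < eps -> exists delta, 0 < delta /\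
    forall x' u' p', Rabs (x' - x) < delta -> Rabs (u' - u) < delta ->
      Rabs (p' - p) < delta -> Rabs (f x' u' p' - f x u p) < eps.

Fixpoint Cn (U : R -> R -> R -> Prop) (n : nat) (f : fn3) : Prop :=
  match n with
  | O => forall x u p, U x u p -> cont_at3 f x u p
  | S m =>
      (forall x u p, U x u p ->
         ex_derive (fun t => f t u p) x /\ ex_derive (fun t => f x t p) u /\
         ex_derive (fun t => f x u t) p)
      /\ Cn U m f /\ Cn U m (dx f) /\ Cn U m (du f) /\ Cn U m (dp f)
  end.

Definition smooth_on U (f : fn3) : Prop := forall n, Cn U n f.

Record vf := VF { vx : fn3; vu : fn3; vp : fn3 }.

Definition act (V : vf) (f : fn3) : fn3 := fun x u p =>
  vx V x u p * dx f x u p + vu V x u p * du f x u p + vp V x u p * dp f x u p.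

Definition bracket (V W : vf) : vf :=
  VF (fun x u p => act V (vx W) x u p - act W (vx V) x u p)
     (fun x u p => act V (vu W) x u p - act W (vu V) x u p)
     (fun x u p => act V (vp W) x u p - act W (vp V) x u p).

Definition vf_add (V W : vf) : vf :=
  VF (fun x u p => vx V x u p + vx W x u p)
     (fun x u p => vu V x u p + vu W x u p)
     (fun x u p => vp V x u p + vp W x u p).

Definition vf_scale (g : fn3) (V : vf) : vf :=
  VF (fun x u p => g x u p * vx V x u p)
     (fun x u p => g x u p * vu V x u p)
     (fun x u p => g x u p * vp V x u p).

Definition vf_zero : vf := VF (fun _ _ _ => 0) (fun _ _ _ => 0) (fun _ _ _ => 0).

Definition vf_eq_on (U : R -> R -> R -> Prop) (V W : vf) : Prop :=
  forall x u p, U x u p ->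
    vx V x u p = vx W x u p /\ vu V x u p = vu W x u p /\ vp V x u p = vp W x u p.

Definition Afield (phi : fn3) : vf := VF (fun _ _ _ => 1) (fun _ _ p => p) phi.

Definition prol (phi xi eta lam : fn3) : vf :=
  VF xi eta (fun x u p =>
    (act (Afield phi) eta x u p + lam x u p * eta x u p)
    - (act (Afield phi) xi x u p + lam x u p * xi x u p) * p).

Definition gen_sym U (phi xi eta lam : fn3) : Prop :=
  smooth_on U xi /\ smooth_on U eta /\ smooth_on U lam /\
  let Y := prol phi xi eta lam in
  let mu : fn3 := fun x u p =>
    - (act (Afield phi) xi x u p + lam x u p * xi x u p) in
  vf_eq_on U (bracket Y (Afield phi))
             (vf_add (vf_scale lam Y) (vf_scale mu (Afield phi))).

(* {V1,V2,V3} linearly dependent over C^infinity(U): a nontrivial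
   (not identically zero on U) combination with smooth coefficients vanishes *)
Definition lin_dep3 U (V1 V2 V3 : vf) : Prop :=
  exists a b c : fn3, smooth_on U a /\ smooth_on U b /\ smooth_on U c /\
    (exists x u p, U x u p /\ (a x u p <> 0 \/ b x u p <> 0 \/ c x u p <> 0)) /\
    vf_eq_on U (vf_add (vf_scale a V1) (vf_add (vf_scale b V2) (vf_scale c V3)))
               vf_zero.

Definition A_equiv U (phi xi1 eta1 lam1 xi2 eta2 lam2 : fn3) : Prop :=
  lin_dep3 U (Afield phi) (prol phi xi1 eta1 lam1) (prol phi xi2 eta2 lam2).

Definition zero3 : fn3 := fun _ _ _ => 0.
Definition one3 : fn3 := fun _ _ _ => 1.

(* Write X = d_u + lam d_{u_x} and, for f <> 0, rho = lam - A(f)/f.  The rho-prolongation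
   Y of f d_u has u_x-component A(f) + rho f = lam f, so Y = f X: the pair (f d_u, rho) lies
   in the class of (d_u, lam), and Y acts on functions as f X.  The symmetry condition for
   (d_u, lam) is the Riccati equation A(lam) = phi_u + lam phi_{u_x} - lam^2, which turns
   [Y, A] into rho Y.  Finally [f1 X1, f2 X2] = f1 X1(f2) X2 - f2 X2(f1) X1 + f1 f2 [X1, X2]
   with [X1, X2] = (X1(lam2) - X2(lam1)) d_{u_x} = rho (lam1 - lam2) d_{u_x} = rho (X1 - X2),
   and the hypotheses X1(f2) = rho f2, X2(f1) = rho f1 make all terms cancel. *)

From Stdlib Require Import Reals Lra FunctionalExtensionality.
From Coquelicot Require Import Coquelicot.
Open Scope R_scope.

Definition uncurry3 (f : fn3) (z : R * (R * R)) : R := f (fst z) (fst (snd z)) (snd (snd z)).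

Lemma cont_at3_continuous f x u p :
  cont_at3 f x u p <-> continuous (uncurry3 f) (x, (u, p)).
Proof.
unfold continuous; rewrite filterlim_locally; split.
- intros H eps. destruct (H eps (cond_pos eps)) as [d [hd Hd]].
  exists (mkposreal d hd). intros [x' [u' p']] [b1 [b2 b3]]. exact (Hd x' u' p' b1 b2 b3).
- intros H eps he. destruct (H (mkposreal eps he)) as [d Hd].
  exists d; split; [apply cond_pos|]. intros x' u' p' b1 b2 b3.
  exact (Hd (x', (u', p')) (conj b1 (conj b2 b3))).
Qed.

Lemma cont_at3_const c x u p : cont_at3 (fun _ _ _ => c) x u p.
Proof. apply cont_at3_continuous, continuous_const. Qed.

Lemma cont_at3_p x u p : cont_at3 (fun _ _ p => p) x u p.
Proof. apply cont_at3_continuous. apply (continuous_comp snd snd), continuous_snd; apply continuous_snd. Qed.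

Lemma cont_at3_plus f g x u p : cont_at3 f x u p -> cont_at3 g x u p ->
  cont_at3 (fun x u p => f x u p + g x u p) x u p.
Proof. rewrite !cont_at3_continuous; apply (continuous_plus (V := R_NormedModule)). Qed.

Lemma cont_at3_mult f g x u p : cont_at3 f x u p -> cont_at3 g x u p ->
  cont_at3 (fun x u p => f x u p * g x u p) x u p.
Proof. rewrite !cont_at3_continuous; apply (continuous_mult (K := R_AbsRing)). Qed.

Lemma cont_at3_inv f x u p : f x u p <> 0 -> cont_at3 f x u p ->
  cont_at3 (fun x u p => / f x u p) x u p.
Proof.
intros hf; rewrite !cont_at3_continuous; intro H.
apply (continuous_comp (uncurry3 f) Rinv); [exact H | exact (continuous_Rinv _ hf)].
Qed.

Section Smoothness.

Variable U : R -> R -> R -> Prop.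
Hypothesis hU : open3 U.

Lemma open3_locally x u p : U x u p ->
  locally x (fun t => U t u p) /\ locally u (fun t => U x t p) /\
  locally p (fun t => U x u t).
Proof.
intros h; destruct (hU _ _ _ h) as [e [he H]].
assert (h0 : Rabs 0 < e) by (rewrite Rabs_R0; exact he).
repeat split; exists (mkposreal e he); intros t ht; apply H;
  first [exact ht | rewrite Rminus_eq_0; exact h0].
Qed.

Lemma partials_ext_on f g x u p :
  (forall x u p, U x u p -> f x u p = g x u p) -> U x u p ->
  dx f x u p = dx g x u p /\ du f x u p = du g x u p /\ dp f x u p = dp g x u p.
Proof.
intros E h; destruct (open3_locally x u p h) as [Lx [Lu Lp]].
repeat split; apply Derive_ext_loc;
  (eapply filter_imp; [|eassumption]); intros t ht; apply E; exact ht.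
Qed.

Lemma act_ext_on V f g x u p :
  (forall x u p, U x u p -> f x u p = g x u p) -> U x u p ->
  act V f x u p = act V g x u p.
Proof.
intros E h; destruct (partials_ext_on f g x u p E h) as [Ex [Eu Ep]].
unfold act; rewrite Ex, Eu, Ep; reflexivity.
Qed.

Lemma Cn_ext n : forall f g,
  (forall x u p, U x u p -> f x u p = g x u p) -> Cn U n f -> Cn U n g.
Proof.
induction n as [|m IH]; intros f g E Hf.
- intros x u p h e he.
  destruct (Hf x u p h e he) as [d [hd H]], (hU _ _ _ h) as [r [hr Hr]].
  exists (Rmin d r); split; [apply Rmin_pos; assumption|].
  intros x' u' p' a b c.
  pose proof (Rmin_l d r); pose proof (Rmin_r d r).
  rewrite <- (E x u p h), <- (E x' u' p' (Hr x' u' p' ltac:(lra) ltac:(lra) ltac:(lra))).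
  apply H; lra.
- destruct Hf as [exf [F0 [Fx [Fu Fp]]]].
  split; [|split; [exact (IH f g E F0)|split; [|split]]].
  + intros x u p h; destruct (exf x u p h) as [a [b c]], (open3_locally x u p h) as [Lx [Lu Lp]].
    repeat split; (eapply ex_derive_ext_loc; [|eassumption]);
      (eapply filter_imp; [|eassumption]); intros t ht; apply E; exact ht.
  + apply (IH (dx f)); [|exact Fx]; intros; apply (partials_ext_on f g); assumption.
  + apply (IH (du f)); [|exact Fu]; intros; apply (partials_ext_on f g); assumption.
  + apply (IH (dp f)); [|exact Fp]; intros; apply (partials_ext_on f g); assumption.
Qed.

Lemma Cn_const n : forall c, Cn U n (fun _ _ _ => c).
Proof.
induction n as [|m IH]; intros c.
- intros x u p _; apply cont_at3_const.
- split; [|split; [apply IH|split; [|split]]].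
  + intros; repeat split; apply ex_derive_const.
  + apply (Cn_ext _ (fun _ _ _ => 0)); [|apply IH]. intros; symmetry; exact (Derive_const _ _).
  + apply (Cn_ext _ (fun _ _ _ => 0)); [|apply IH]. intros; symmetry; exact (Derive_const _ _).
  + apply (Cn_ext _ (fun _ _ _ => 0)); [|apply IH]. intros; symmetry; exact (Derive_const _ _).
Qed.

Lemma Cn_p n : Cn U n (fun _ _ p => p).
Proof.
induction n as [|m IH].
- intros x u p _; apply cont_at3_p.
- split; [|split; [exact IH|split; [|split]]].
  + intros; repeat split; [apply ex_derive_const|apply ex_derive_const|apply ex_derive_id].
  + apply (Cn_ext _ (fun _ _ _ => 0)); [|apply Cn_const]. intros; symmetry; exact (Derive_const _ _).
  + apply (Cn_ext _ (fun _ _ _ => 0)); [|apply Cn_const]. intros; symmetry; exact (Derive_const _ _).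
  + apply (Cn_ext _ (fun _ _ _ => 1)); [|apply Cn_const]. intros; symmetry; apply Derive_id.
Qed.

Lemma Cn_plus n : forall f g, Cn U n f -> Cn U n g ->
  Cn U n (fun x u p => f x u p + g x u p).
Proof.
induction n as [|m IH]; intros f g Hf Hg.
- intros x u p h; apply cont_at3_plus; [apply Hf|apply Hg]; exact h.
- destruct Hf as [exf [F0 [Fx [Fu Fp]]]], Hg as [exg [G0 [Gx [Gu Gp]]]].
  split; [|split; [exact (IH f g F0 G0)|split; [|split]]].
  + intros x u p h; destruct (exf x u p h) as [a [b c]], (exg x u p h) as [a' [b' c']].
    repeat split; apply (ex_derive_plus (K := R_AbsRing) (V := R_NormedModule)); assumption.
  + apply (Cn_ext _ (fun x u p => dx f x u p + dx g x u p)); [|exact (IH _ _ Fx Gx)].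
    intros x u p h; destruct (exf x u p h) as [a _], (exg x u p h) as [a' _].
    symmetry; apply Derive_plus; assumption.
  + apply (Cn_ext _ (fun x u p => du f x u p + du g x u p)); [|exact (IH _ _ Fu Gu)].
    intros x u p h; destruct (exf x u p h) as [_ [b _]], (exg x u p h) as [_ [b' _]].
    symmetry; apply Derive_plus; assumption.
  + apply (Cn_ext _ (fun x u p => dp f x u p + dp g x u p)); [|exact (IH _ _ Fp Gp)].
    intros x u p h; destruct (exf x u p h) as [_ [_ c]], (exg x u p h) as [_ [_ c']].
    symmetry; apply Derive_plus; assumption.
Qed.

Lemma Cn_mult n : forall f g, Cn U n f -> Cn U n g ->
  Cn U n (fun x u p => f x u p * g x u p).
Proof.
induction n as [|m IH]; intros f g Hf Hg.
- intros x u p h; apply cont_at3_mult; [apply Hf|apply Hg]; exact h.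
- destruct Hf as [exf [F0 [Fx [Fu Fp]]]], Hg as [exg [G0 [Gx [Gu Gp]]]].
  split; [|split; [exact (IH f g F0 G0)|split; [|split]]].
  + intros x u p h; destruct (exf x u p h) as [a [b c]], (exg x u p h) as [a' [b' c']].
    repeat split; apply ex_derive_mult; assumption.
  + apply (Cn_ext _ (fun x u p => dx f x u p * g x u p + f x u p * dx g x u p));
      [|apply Cn_plus; apply IH; assumption].
    intros x u p h; destruct (exf x u p h) as [a _], (exg x u p h) as [a' _].
    symmetry; apply Derive_mult; assumption.
  + apply (Cn_ext _ (fun x u p => du f x u p * g x u p + f x u p * du g x u p));
      [|apply Cn_plus; apply IH; assumption].
    intros x u p h; destruct (exf x u p h) as [_ [b _]], (exg x u p h) as [_ [b' _]].
    symmetry; apply Derive_mult; assumption.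
  + apply (Cn_ext _ (fun x u p => dp f x u p * g x u p + f x u p * dp g x u p));
      [|apply Cn_plus; apply IH; assumption].
    intros x u p h; destruct (exf x u p h) as [_ [_ c]], (exg x u p h) as [_ [_ c']].
    symmetry; apply Derive_mult; assumption.
Qed.

Lemma Cn_inv n : forall f, (forall x u p, U x u p -> f x u p <> 0) -> Cn U n f ->
  Cn U n (fun x u p => / f x u p).
Proof.
induction n as [|m IH]; intros f nz Hf.
- intros x u p h; apply cont_at3_inv; [apply nz|apply Hf]; exact h.
- destruct Hf as [exf [F0 [Fx [Fu Fp]]]].
  assert (I := IH f nz F0).
  assert (Isq : Cn U m (fun x u p => -1 * (/ f x u p * / f x u p))).
  { apply Cn_mult; [apply Cn_const|apply Cn_mult; exact I]. }
  split; [|split; [exact I|split; [|split]]].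
  + intros x u p h; destruct (exf x u p h) as [a [b c]].
    repeat split; apply ex_derive_inv; auto.
  + apply (Cn_ext _ (fun x u p => dx f x u p * (-1 * (/ f x u p * / f x u p))));
      [|apply Cn_mult; assumption].
    intros x u p h; destruct (exf x u p h) as [a _].
    unfold dx; rewrite Derive_inv; [field|..]; auto.
  + apply (Cn_ext _ (fun x u p => du f x u p * (-1 * (/ f x u p * / f x u p))));
      [|apply Cn_mult; assumption].
    intros x u p h; destruct (exf x u p h) as [_ [b _]].
    unfold du; rewrite Derive_inv; [field|..]; auto.
  + apply (Cn_ext _ (fun x u p => dp f x u p * (-1 * (/ f x u p * / f x u p))));
      [|apply Cn_mult; assumption].
    intros x u p h; destruct (exf x u p h) as [_ [_ c]].
    unfold dp; rewrite (Derive_inv (fun t => f x u t)); [field|..]; auto.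
Qed.

Lemma smooth_ext f g :
  (forall x u p, U x u p -> f x u p = g x u p) -> smooth_on U f -> smooth_on U g.
Proof. intros E H n; exact (Cn_ext n f g E (H n)). Qed.

Lemma smooth_const c : smooth_on U (fun _ _ _ => c).
Proof. intro n; apply Cn_const. Qed.

Lemma smooth_p : smooth_on U (fun _ _ p => p).
Proof. intro n; apply Cn_p. Qed.

Lemma smooth_plus f g : smooth_on U f -> smooth_on U g ->
  smooth_on U (fun x u p => f x u p + g x u p).
Proof. intros Hf Hg n; apply Cn_plus; auto. Qed.

Lemma smooth_mult f g : smooth_on U f -> smooth_on U g ->
  smooth_on U (fun x u p => f x u p * g x u p).
Proof. intros Hf Hg n; apply Cn_mult; auto. Qed.

Lemma smooth_inv f : (forall x u p, U x u p -> f x u p <> 0) -> smooth_on U f ->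
  smooth_on U (fun x u p => / f x u p).
Proof. intros nz Hf n; apply Cn_inv; auto. Qed.

Lemma smooth_partials f : smooth_on U f ->
  smooth_on U (dx f) /\ smooth_on U (du f) /\ smooth_on U (dp f).
Proof.
intros H; repeat split; intro n; destruct (H (S n)) as [_ [_ [Hx [Hu Hp]]]]; assumption.
Qed.

Lemma smooth_ex_derive f x u p : smooth_on U f -> U x u p ->
  ex_derive (fun t => f t u p) x /\ ex_derive (fun t => f x t p) u /\
  ex_derive (fun t => f x u t) p.
Proof. intros H h; exact (proj1 (H 1%nat) x u p h). Qed.

Lemma act_mult V f g x u p : smooth_on U f -> smooth_on U g -> U x u p ->
  act V (fun x u p => f x u p * g x u p) x u p
  = act V f x u p * g x u p + f x u p * act V g x u p.
Proof.
intros hf hg h.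
destruct (smooth_ex_derive f x u p hf h) as [a [b c]], (smooth_ex_derive g x u p hg h) as [a' [b' c']].
unfold act, dx, du, dp.
rewrite (Derive_mult (fun t => f t u p) (fun t => g t u p) x a a'),
  (Derive_mult (fun t => f x t p) (fun t => g x t p) u b b'),
  (Derive_mult (fun t => f x u t) (fun t => g x u t) p c c').
ring.
Qed.

End Smoothness.

Definition Xfield (lam : fn3) : vf := VF zero3 one3 lam.

Definition rescaled_lam (phi lam f : fn3) : fn3 :=
  fun x u p => lam x u p - act (Afield phi) f x u p / f x u p.

Definition Yfield (phi lam f : fn3) : vf := prol phi zero3 f (rescaled_lam phi lam f).

Lemma act_const V c x u p : act V (fun _ _ _ => c) x u p = 0.
Proof. unfold act, dx, du, dp; rewrite !Derive_const; ring. Qed.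

Lemma act_p V x u p : act V (fun _ _ p => p) x u p = vp V x u p.
Proof.
unfold act, dx, du, dp; rewrite !Derive_const.
change (Derive (fun t => t) p) with (Derive id p); rewrite Derive_id; ring.
Qed.

Lemma act_Xfield lam g x u p :
  act (Xfield lam) g x u p = du g x u p + lam x u p * dp g x u p.
Proof. unfold act, Xfield, zero3, one3; simpl; ring. Qed.

Lemma prol_canonical phi lam : prol phi zero3 one3 lam = Xfield lam.
Proof.
unfold prol, Xfield; f_equal.
apply functional_extensionality; intro x; apply functional_extensionality; intro u;
  apply functional_extensionality; intro p.
rewrite (act_const _ 0), (act_const _ 1); unfold zero3, one3; ring.
Qed.

Lemma vp_Yfield phi lam f x u p : f x u p <> 0 ->
  vp (Yfield phi lam f) x u p = lam x u p * f x u p.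
Proof.
intro hf; unfold Yfield, prol, rescaled_lam; cbn [vp].
rewrite (act_const _ 0); unfold zero3; field; exact hf.
Qed.

Lemma act_Yfield phi lam f g x u p : f x u p <> 0 ->
  act (Yfield phi lam f) g x u p = f x u p * act (Xfield lam) g x u p.
Proof.
intro hf; rewrite act_Xfield; unfold act at 1.
rewrite (vp_Yfield _ _ _ _ _ _ hf); unfold Yfield, prol, zero3; cbn [vx vu]; ring.
Qed.

Lemma gen_sym_riccati U phi lam x u p : gen_sym U phi zero3 one3 lam -> U x u p ->
  act (Afield phi) lam x u p
  = du phi x u p + lam x u p * dp phi x u p - lam x u p * lam x u p.
Proof.
intros [_ [_ [_ H]]] h; cbv zeta in H; rewrite prol_canonical in H.
destruct (H x u p h) as [_ [_ Hp]].
unfold bracket, vf_add, vf_scale, Xfield in Hp; cbn [vx vu vp] in Hp.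
rewrite act_Xfield, (act_const _ 0) in Hp; unfold zero3 in Hp; cbn [vp Afield] in Hp.
lra.
Qed.

Section Rescaling.

Variables (U : R -> R -> R -> Prop) (phi lam f : fn3).
Hypotheses (hU : open3 U) (hphi : smooth_on U phi)
  (hsym : gen_sym U phi zero3 one3 lam)
  (hf_smooth : smooth_on U f) (hf : forall x u p, U x u p -> f x u p <> 0).

Lemma smooth_lam : smooth_on U lam.
Proof. exact (proj1 (proj2 (proj2 hsym))). Qed.

Lemma smooth_rescaled_lam : smooth_on U (rescaled_lam phi lam f).
Proof.
destruct (smooth_partials U f hf_smooth) as [fx [fu fp]].
apply (smooth_ext U hU (fun x u p => lam x u p + -1 *
  ((1 * dx f x u p + p * du f x u p + phi x u p * dp f x u p) * / f x u p))).
{ intros x u p _; unfold rescaled_lam, act, Rdiv; simpl; ring. }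
apply (smooth_plus U hU); [exact smooth_lam|].
apply (smooth_mult U hU); [apply (smooth_const U hU)|].
apply (smooth_mult U hU); [|exact (smooth_inv U hU f hf hf_smooth)].
repeat apply (smooth_plus U hU); apply (smooth_mult U hU);
  first [apply (smooth_const U hU) | apply (smooth_p U hU) | assumption].
Qed.

Lemma bracket_Yfield_A :
  vf_eq_on U (bracket (Yfield phi lam f) (Afield phi))
    (vf_scale (rescaled_lam phi lam f) (Yfield phi lam f)).
Proof.
intros x u p h; unfold bracket, vf_scale; cbn [vx vu vp Afield].
rewrite (act_const _ 1), (act_p _ x u p).
change (vx (Yfield phi lam f)) with zero3; change (vu (Yfield phi lam f)) with f.
rewrite (act_const _ 0); unfold zero3.
repeat split; [ring| |].
- rewrite (vp_Yfield _ _ _ _ _ _ (hf x u p h)); unfold rescaled_lam; field; exact (hf x u p h).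
- rewrite (act_ext_on U hU (Afield phi) (vp (Yfield phi lam f)) (fun x u p => lam x u p * f x u p));
    [|intros; apply vp_Yfield, hf; assumption | exact h].
  rewrite (act_mult U _ _ _ _ _ _ smooth_lam hf_smooth h), (act_Yfield _ _ _ _ _ _ _ (hf x u p h)),
    act_Xfield, (vp_Yfield _ _ _ _ _ _ (hf x u p h)), (gen_sym_riccati U phi lam x u p hsym h).
  unfold rescaled_lam; field; exact (hf x u p h).
Qed.

Lemma gen_sym_Yfield : gen_sym U phi zero3 f (rescaled_lam phi lam f).
Proof.
split; [exact (smooth_const U hU 0)|split; [exact hf_smooth|split; [exact smooth_rescaled_lam|]]].
cbv zeta; fold (Yfield phi lam f); intros x u p h.
destruct (bracket_Yfield_A x u p h) as [Bx [Bu Bp]].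
repeat split; [rewrite Bx|rewrite Bu|rewrite Bp];
  unfold vf_add, vf_scale; cbn [vx vu vp]; rewrite (act_const _ 0); unfold zero3; ring.
Qed.

Lemma A_equiv_Yfield : (exists x u p, U x u p) ->
  A_equiv U phi zero3 f (rescaled_lam phi lam f) zero3 one3 lam.
Proof.
intros [x0 [u0 [p0 h0]]]; unfold A_equiv, lin_dep3; rewrite prol_canonical.
exists zero3, one3, (fun x u p => -1 * f x u p).
split; [exact (smooth_const U hU 0)|split; [exact (smooth_const U hU 1)|split]].
{ apply (smooth_mult U hU); [apply (smooth_const U hU)|exact hf_smooth]. }
split.
- exists x0, u0, p0; split; [exact h0|right; left; unfold one3; lra].
- intros x u p h; unfold vf_add, vf_scale, vf_zero, Xfield; cbn [vx vu vp].
  fold (Yfield phi lam f); rewrite (vp_Yfield _ _ _ _ _ _ (hf x u p h)).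
  unfold Yfield, prol, zero3, one3; cbn [vx vu]; repeat split; ring.
Qed.

End Rescaling.

Section Commutation.

Variables (U : R -> R -> R -> Prop) (phi lam1 lam2 f1 f2 r : fn3).
Hypotheses (hU : open3 U)
  (hlam1 : smooth_on U lam1) (hlam2 : smooth_on U lam2)
  (hf1_smooth : smooth_on U f1) (hf2_smooth : smooth_on U f2)
  (hf1 : forall x u p, U x u p -> f1 x u p <> 0)
  (hf2 : forall x u p, U x u p -> f2 x u p <> 0)
  (hX1f2 : forall x u p, U x u p -> act (Xfield lam1) f2 x u p = r x u p * f2 x u p)
  (hX2f1 : forall x u p, U x u p -> act (Xfield lam2) f1 x u p = r x u p * f1 x u p)
  (hXlam : forall x u p, U x u p ->
     act (Xfield lam1) lam2 x u p - act (Xfield lam2) lam1 x u p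
     = r x u p * (lam1 x u p - lam2 x u p)).

Lemma act_Yfield_vp lam lam' f f' x u p :
  smooth_on U lam' -> smooth_on U f' -> (forall x u p, U x u p -> f' x u p <> 0) ->
  U x u p -> f x u p <> 0 ->
  act (Yfield phi lam f) (vp (Yfield phi lam' f')) x u p
  = f x u p * (act (Xfield lam) lam' x u p * f' x u p + lam' x u p * act (Xfield lam) f' x u p).
Proof.
intros hl' hs' hf' h hf.
rewrite (act_ext_on U hU _ _ (fun x u p => lam' x u p * f' x u p));
  [|intros; apply vp_Yfield, hf'; assumption | exact h].
rewrite (act_Yfield _ _ _ _ _ _ _ hf), (act_mult U _ _ _ _ _ _ hl' hs' h); reflexivity.
Qed.

Lemma bracket_Yfield_comm :
  vf_eq_on U (bracket (Yfield phi lam1 f1) (Yfield phi lam2 f2)) vf_zero.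
Proof.
intros x u p h; unfold bracket, vf_zero; cbn [vx vu vp].
change (vx (Yfield phi lam1 f1)) with zero3; change (vx (Yfield phi lam2 f2)) with zero3.
change (vu (Yfield phi lam1 f1)) with f1; change (vu (Yfield phi lam2 f2)) with f2.
rewrite !(act_const _ 0), (act_Yfield _ _ _ _ _ _ _ (hf1 x u p h)),
  (act_Yfield _ _ _ _ _ _ _ (hf2 x u p h)), (hX1f2 x u p h), (hX2f1 x u p h).
rewrite (act_Yfield_vp lam1 lam2 f1 f2 x u p hlam2 hf2_smooth hf2 h (hf1 x u p h)),
  (act_Yfield_vp lam2 lam1 f2 f1 x u p hlam1 hf1_smooth hf1 h (hf2 x u p h)),
  (hX1f2 x u p h), (hX2f1 x u p h).
assert (E := hXlam x u p h).
repeat split; [ring|ring|].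
replace (act (Xfield lam1) lam2 x u p)
  with (act (Xfield lam2) lam1 x u p + r x u p * (lam1 x u p - lam2 x u p)) by lra.
ring.
Qed.

End Commutation.

Theorem theorem1
  (U : R -> R -> R -> Prop) (phi lam1 lam2 f1 f2 : fn3)
  (hU : open3 U) (hne : exists x u p, U x u p)
  (hphi : smooth_on U phi)
  (hsym1 : gen_sym U phi zero3 one3 lam1)
  (hsym2 : gen_sym U phi zero3 one3 lam2)
  (hnoneq : ~ A_equiv U phi zero3 one3 lam1 zero3 one3 lam2)
  (hlam : forall x u p, U x u p -> lam1 x u p - lam2 x u p <> 0)
  (hf1s : smooth_on U f1) (hf2s : smooth_on U f2)
  (hf1 : forall x u p, U x u p -> f1 x u p <> 0)
  (hf2 : forall x u p, U x u p -> f2 x u p <> 0) :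
  let X1 := prol phi zero3 one3 lam1 in
  let X2 := prol phi zero3 one3 lam2 in
  let rho : fn3 := fun x u p =>
    (act X1 lam2 x u p - act X2 lam1 x u p) / (lam1 x u p - lam2 x u p) in
  (forall x u p, U x u p ->
     act X1 f2 x u p / f2 x u p = rho x u p /\
     act X2 f1 x u p / f1 x u p = rho x u p) ->
  let rho1 : fn3 := fun x u p =>
    lam1 x u p - act (Afield phi) f1 x u p / f1 x u p in
  let rho2 : fn3 := fun x u p =>
    lam2 x u p - act (Afield phi) f2 x u p / f2 x u p in
  let Y1 := prol phi zero3 f1 rho1 in
  let Y2 := prol phi zero3 f2 rho2 in
  (gen_sym U phi zero3 f1 rho1 /\ A_equiv U phi zero3 f1 rho1 zero3 one3 lam1) /\
  (gen_sym U phi zero3 f2 rho2 /\ A_equiv U phi zero3 f2 rho2 zero3 one3 lam2) /\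
  vf_eq_on U (bracket Y1 (Afield phi)) (vf_scale rho1 Y1) /\
  vf_eq_on U (bracket Y2 (Afield phi)) (vf_scale rho2 Y2) /\
  vf_eq_on U (bracket Y1 Y2) vf_zero.
Proof.
cbv zeta; rewrite !prol_canonical; intro Hrho.
fold (Yfield phi lam1 f1) (Yfield phi lam2 f2).
assert (hlam1 := smooth_lam U phi lam1 hsym1).
assert (hlam2 := smooth_lam U phi lam2 hsym2).
pose (rho := fun x u p => (act (Xfield lam1) lam2 x u p - act (Xfield lam2) lam1 x u p)
                          / (lam1 x u p - lam2 x u p)).
refine (conj (conj _ _) (conj (conj _ _) (conj _ (conj _ _))));
  [ apply gen_sym_Yfield | apply A_equiv_Yfield
  | apply gen_sym_Yfield | apply A_equiv_Yfield
  | apply bracket_Yfield_A | apply bracket_Yfield_A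
  | apply (bracket_Yfield_comm U phi lam1 lam2 f1 f2 rho) ]; try assumption.
- intros x u p h; destruct (Hrho x u p h) as [E _].
  unfold rho; rewrite <- E; field; auto.
- intros x u p h; destruct (Hrho x u p h) as [_ E].
  unfold rho; rewrite <- E; field; auto.
- intros x u p h; unfold rho; field; auto.
Qed.
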